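(* Let $d\ge1$, $k\ge2$, and let $G=(V,D)$ be an $\mathcal{R}_d$-connected $k$-fold $\mathcal{R}_d$-circuit whose set of technicolour vertices is $X=\{u,v\}$. (i) If $uv\in D$, then $G$ is the graphical parallel connection of $k$ $\mathcal{R}_d$-circuits along $uv$. (ii) If $uv\notin D$, then $G$ is obtained from the graphical parallel connection of $k+1$ $\mathcal{R}_d$-circuits along $uv$ by deleting $uv$.
   Context: For a graph $G=(V,E)$ and a generic $p:V\to\mathbb{R}^d$ (coordinates algebraically independent over $\mathbb{Q}$), the rigidity matrix has a row for each $uv\in E$ with $p(u)-p(v)$ in the $d$ columns of $u$, $p(v)-p(u)$ in those of $v$, zeros elsewhere; $\mathcal{R}_d$ is its row matroid, with rank $r_d$. A graph is $\mathcal{R}_d$-connected if the restriction of $\mathcal{R}_d$ to its edge set is a connected matroid (every two edges lie in a common circuit). A set of edges is cyclic if it is a union of $\mathcal{R}_d$-circuits. $(V,D)$ is a $k$-fold $\mathcal{R}_d$-circuit if $D$ is cyclic and $r_d(D)=|D|-k$. Its principal partition is the partition $\{A_1,\dots,A_\ell\}$ of $D$ such that $\{D\setminus A_i\}$ is exactly the set of $(k-1)$-fold $\mathcal{R}_d$-circuits contained in $D$. A vertex is technicolour if it is incident with edges from at least two parts of the principal partition. The graphical parallel connection of graphs $H_1,\dots,H_m$ along the edge $uv$ is their union, where each $H_i$ contains the edge $uv$ and $H_i\cap H_j$ consists exactly of the vertices $u,v$ and the edge $uv$ for $i\neq j$. *)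

From HB Require Import structures.
From mathcomp Require Import all_boot all_order all_algebra.
From mathcomp Require Import mpoly.
Set Implicit Arguments. Unset Strict Implicit. Unset Printing Implicit Defensive.
Import Order.TTheory GRing.Theory Num.Theory.
Local Open Scope ring_scope.

(* Graphs on a finite vertex type V: an edge is a 2-element subset of V,
   an edge set is a {set {set V}}. *)
Section Rigidity.
Variables (R : realFieldType) (V : finType) (d : nat).

Definition coord_matrix (p : V -> 'rV[R]_d) : 'M[R]_(#|V|, d) :=
  \matrix_(i < #|V|, j < d) p (enum_val i) 0 j.

Definition coords (p : V -> 'rV[R]_d) : 'I_(#|V| * d) -> R :=
  fun i => mxvec (coord_matrix p) 0 i.

(* p is generic: its coordinates are algebraically independent over Q *)
Definition generic (p : V -> 'rV[R]_d) : Prop :=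
  forall q : {mpoly rat[#|V| * d]}, q != 0 -> mmap ratr (coords p) q != 0.

Definition is_edge (e : {set V}) : bool := #|e| == 2.
Definition edgeset (F : {set {set V}}) : bool := [forall e in F, is_edge e].

(* the row of the rigidity matrix for the edge e = ab (orientation chosen by
   [pick]; the sign does not affect the row matroid) *)
Definition rig_row (p : V -> 'rV[R]_d) (e : {set V}) : 'rV[R]_(#|V| * d) :=
  match [pick x in e] with
  | Some a =>
    match [pick y in e :\ a] with
    | Some b => mxvec (\matrix_(i < #|V|, j < d)
                  (if enum_val i == a then p a 0 j - p b 0 j
                   else if enum_val i == b then p b 0 j - p a 0 j else 0))
    | None => 0
    end
  | None => 0
  end.

Definition rank_d (p : V -> 'rV[R]_d) (F : {set {set V}}) : nat :=
  \rank (\sum_(e in F) <<rig_row p e>>)%MS.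

Definition dependent (p : V -> 'rV[R]_d) (F : {set {set V}}) : bool :=
  (rank_d p F < #|F|)%N.

Definition circuit (p : V -> 'rV[R]_d) (C : {set {set V}}) : Prop :=
  edgeset C /\ dependent p C /\ (forall F : {set {set V}}, F \proper C -> ~~ dependent p F).

Definition Rconnected (p : V -> 'rV[R]_d) (D : {set {set V}}) : Prop :=
  forall e f, e \in D -> f \in D ->
    exists C : {set {set V}}, [/\ C \subset D, circuit p C, e \in C & f \in C].

Definition cyclic (p : V -> 'rV[R]_d) (D : {set {set V}}) : Prop :=
  forall e, e \in D -> exists C : {set {set V}}, [/\ C \subset D, circuit p C & e \in C].

Definition kfold_circuit (p : V -> 'rV[R]_d) (k : nat) (D : {set {set V}}) : Prop :=
  [/\ edgeset D, cyclic p D & (rank_d p D + k)%N = #|D|].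

Definition principal_partition (p : V -> 'rV[R]_d) (k : nat)
    (D : {set {set V}}) (P : {set {set {set V}}}) : Prop :=
  partition P D /\
  (forall D' : {set {set V}}, D' \subset D ->
     (kfold_circuit p k.-1 D' <-> exists2 A, A \in P & D' = D :\: A)).

Definition technicolour (D : {set {set V}}) (P : {set {set {set V}}}) (x : V) : Prop :=
  exists (A B : {set {set V}}) (e f : {set V}), [/\ A \in P, B \in P, A != B &
                     [/\ e \in A, f \in B, x \in e & x \in f]].

Definition verts (F : {set {set V}}) : {set V} := \bigcup_(e in F) e.

Definition parallel_connection (m : nat) (H : 'I_m -> {set {set V}}) (u v : V) : Prop :=
  (forall i, [set u; v] \in H i) /\
  (forall i j, i != j ->
     H i :&: H j = [set [set u; v]] /\ verts (H i) :&: verts (H j) = [set u; v]).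

End Rigidity.

From HB Require Import structures.
From mathcomp Require Import all_boot all_order all_algebra.
From mathcomp Require Import mpoly ring zify.
Set Implicit Arguments. Unset Strict Implicit. Unset Printing Implicit Defensive.
Import Order.TTheory GRing.Theory Num.Theory.
Local Open Scope ring_scope.

(* The vectors in the row space of the rigidity matrix of an edge set E are
   orthogonal to every infinitesimal motion of the vertices of E. If two edge
   sets meet only in u and v, a vector in both row spaces is supported on u, v;
   orthogonality to translations and rotations then forces it onto the line
   spanned by the row of uv, because p is generic.

   Since u and v are the only technicolour vertices, each part A of the
   principal partition meets the rest of D only in u and v. Deleting an edge f
   of D and then the coloops of D - f leaves a (k-1)-fold circuit, hence
   D minus the part of f, so the other edges of that part are coloops of
   D - f. An R_d-circuit through A and D - A, which exists by
   R_d-connectivity, shows that every part spans the row of uv. It follows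
   that each part A is independent, that A + uv is a circuit when uv is not
   in A, and that the part containing uv, if any, is {uv}. Gluing the parts
   one at a time along the common row of uv gives
   r(D) = |D| - |P| + 1, so P has k + 1 parts, and the circuits A + uv form
   the required parallel connection. *)

Lemma mxvec_dot (R : comPzRingType) m n (A B : 'M[R]_(m, n)) :
  (mxvec A *m (mxvec B)^T) 0 0 = \sum_i \sum_j A i j * B i j.
Proof.
rewrite mxE (reindex _ (curry_mxvec_bij _ _)) pair_bigA /=.
by apply: eq_bigr => -[i j] _; rewrite /= mxE !mxvecE.
Qed.

Lemma sum_enum_val (R : nmodType) (V : finType) (F : V -> R) :
  \sum_(i < #|V|) F (enum_val i) = \sum_x F x.
Proof. by rewrite (reindex _ (onW_bij _ (enum_val_bij V))). Qed.

Lemma sum_mul_delta (R : pzSemiRingType) (I : finType) (i0 : I) (F : I -> R) :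
  \sum_i F i * (if i == i0 then 1 else 0) = F i0.
Proof.
rewrite (bigD1 i0) //= eqxx mulr1 big1 ?addr0 // => i /negbTE ->.
exact: mulr0.
Qed.

Lemma sum_mul_deltaB (R : comPzRingType) (I : finType) (F : I -> R) j k x y :
  \sum_i F i * ((if i == k then 1 else 0) * x - (if i == j then 1 else 0) * y)
  = F k * x - F j * y.
Proof.
under eq_bigr => i _ do rewrite mulrBr !mulrA.
by rewrite sumrB -!mulr_suml !sum_mul_delta.
Qed.

Lemma bigcupUl (T I : finType) (i0 : I) (X : {set T}) (F : I -> {set T}) :
  \bigcup_i (X :|: F i) = X :|: \bigcup_i F i.
Proof.
apply/setP => z; rewrite in_setU; apply/bigcupP/orP => [[i _]|[zX|/bigcupP[i _ zi]]].
- by rewrite in_setU => /orP[]; [left | right; apply/bigcupP; exists i].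
- by exists i0 => //; rewrite in_setU zX.
- by exists i => //; rewrite in_setU zi orbT.
Qed.

Section Vertices.
Variable V : finType.
Implicit Types F : {set {set V}}.

Lemma verts_setU1 (e : {set V}) F : verts (e |: F) = e :|: verts F.
Proof.
apply/setP => z; rewrite in_setU; apply/bigcupP/orP.
  move=> [f]; rewrite in_setU1 => /orP[/eqP -> |fF] zf; first by left.
  by right; apply/bigcupP; exists f.
case=> [ze|/bigcupP[f fF zf]]; first by exists e; rewrite ?setU11.
by exists f; rewrite // in_setU1 fF orbT.
Qed.

Lemma verts_bigcup (I : finType) (H : I -> {set {set V}}) :
  verts (\bigcup_i H i) = \bigcup_i verts (H i).
Proof.
apply/setP => z; apply/bigcupP/bigcupP => [[e /bigcupP[i _ eH] ze]|[i _ /bigcupP[e eH ze]]].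
  by exists i => //; apply/bigcupP; exists e.
by exists e => //; apply/bigcupP; exists i.
Qed.

End Vertices.

Section Motions.
Variables (R : realFieldType) (V : finType) (d : nat) (p : V -> 'rV[R]_d).
(* [%SET] keeps [:&:] in the argument from parsing as the row-space meet. *)
Local Notation span F := (\sum_(e in F%SET) <<rig_row p e>>)%MS.
Implicit Types (E F : {set {set V}}) (T : V -> 'I_d -> R).

Definition edge_mx (a b : V) : 'M[R]_(#|V|, d) := \matrix_(i < #|V|, j < d)
  (if enum_val i == a then p a 0 j - p b 0 j
   else if enum_val i == b then p b 0 j - p a 0 j else 0).

Definition edge_row a b := mxvec (edge_mx a b).

Lemma rig_rowE e : is_edge e ->
  exists a b, [/\ a != b, e = [set a; b] & rig_row p e = edge_row a b].
Proof.
move=> /eqP e2; rewrite /rig_row.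
case: pickP => [a ain|none]; last by move: e2; rewrite eq_card0.
case: pickP => [b bin|none]; last first.
  by move: e2; rewrite (cardsD1 a) ain (eq_card0 none).
move: bin; rewrite in_setD1 => /andP[ba bin].
exists a, b; split => //; first by rewrite eq_sym.
apply/eqP; rewrite eq_sym eqEcard e2 cards2 eq_sym ba andbT.
by apply/subsetP => x; rewrite !inE => /orP[] /eqP ->.
Qed.

Lemma edge_rowC a b : a != b -> edge_row a b = edge_row b a.
Proof.
move=> ab; congr mxvec; apply/matrixP => i j; rewrite !mxE.
case: eqP => [->|_]; first by rewrite (negbTE ab).
by case: eqP.
Qed.

Lemma edgeset_rig_rowE E e : edgeset E -> e \in E ->
  exists a b, [/\ a != b, e = [set a; b] & rig_row p e = edge_row a b].
Proof. by move=> /forall_inP h /h /rig_rowE. Qed.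

(* A velocity field T is an infinitesimal motion of the edge ab exactly when
   it pairs to 0 with the row of ab. *)
Definition velocity_mx T : 'M[R]_(#|V|, d) :=
  \matrix_(i < #|V|, j < d) T (enum_val i) j.

Definition pairing (w : 'rV[R]_(#|V| * d)) T := (w *m (mxvec (velocity_mx T))^T) 0 0.

Lemma pairing_mxvec A T :
  pairing (mxvec A) T = \sum_x \sum_j A (enum_rank x) j * T x j.
Proof.
rewrite /pairing mxvec_dot -[RHS]sum_enum_val; apply: eq_bigr => i _.
by apply: eq_bigr => j _; rewrite mxE enum_valK.
Qed.

Lemma pairing_edge_row a b T : a != b ->
  pairing (edge_row a b) T = \sum_j (p a 0 j - p b 0 j) * (T a j - T b j).
Proof.
move=> ab; rewrite pairing_mxvec (bigD1 a) // (bigD1 b) 1?eq_sym //=.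
rewrite [X in _ + (_ + X)]big1; last first.
  move=> x /andP[xa xb]; apply: big1 => j _.
  by rewrite mxE enum_rankK (negbTE xa) (negbTE xb) mul0r.
rewrite addr0 -big_split /=; apply: eq_bigr => j _.
rewrite !mxE !enum_rankK eqxx eq_sym (negbTE ab) eqxx.
by ring.
Qed.

Lemma pairing_span0 F T w :
  (forall e, e \in F -> pairing (rig_row p e) T = 0) ->
  (w <= span F)%MS -> pairing w T = 0.
Proof.
move=> motionT wF.
have: (span F <= kermx (mxvec (velocity_mx T))^T)%MS.
  apply/sumsmx_subP => e eF; rewrite genmxE sub_kermx; apply/eqP/matrixP => i j.
  by rewrite !ord1 [RHS]mxE -(motionT e eF) /pairing mxE.
move=> /(submx_trans wF); rewrite sub_kermx => /eqP /matrixP /(_ 0 0).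
by rewrite [RHS]mxE.
Qed.

Lemma span_coord_notin_verts E x j w : edgeset E -> x \notin verts E ->
  (w <= span E)%MS -> vec_mx w (enum_rank x) j = 0.
Proof.
move=> eE xE wE.
pose T := fun y i => if (y == x) && (i == j) then 1 else 0 : R.
have := pairing_span0 (T := T) _ wE.
rewrite -{1}(vec_mxK w) pairing_mxvec (bigD1 x) //= [X in _ + X]big1 ?addr0; last first.
  by move=> y yx; apply: big1 => i _; rewrite /T (negbTE yx) mulr0.
under eq_bigr => i _ do rewrite /T eqxx /=.
rewrite sum_mul_delta; apply => e eE'.
have [a [b [ab ee ->]]] := edgeset_rig_rowE eE eE'.
have : x \notin [set a; b].
  by rewrite -ee; apply: contra xE => xe; apply/bigcupP; exists e.
rewrite pairing_edge_row // !inE negb_or => /andP[xa xb]; apply: big1 => i _.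
by rewrite /T ![_ == x]eq_sym (negbTE xa) (negbTE xb) subrr mulr0.
Qed.

Section LoadOnTwoVertices.
Variables (u v : V) (E : {set {set V}}) (W : 'M[R]_(#|V|, d)).
Hypotheses (uv : u != v) (eE : edgeset E) (WE : (mxvec W <= span E)%MS)
  (W0 : forall x j, x \notin [set u; v] -> W (enum_rank x) j = 0).

Lemma load_pairing T :
  pairing (mxvec W) T = \sum_i (W (enum_rank u) i * T u i + W (enum_rank v) i * T v i).
Proof.
rewrite pairing_mxvec (bigD1 u) // (bigD1 v) 1?eq_sym //=.
rewrite [X in _ + (_ + X)]big1 ?addr0 ?big_split //.
move=> x /andP[xu xv]; apply: big1 => i _.
by rewrite W0 ?mul0r // !inE negb_or xu xv.
Qed.

Lemma load_translation j : W (enum_rank v) j = - W (enum_rank u) j.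
Proof.
pose T := fun (y : V) i => if i == j then 1 else 0 : R.
have motionT e : e \in E -> pairing (rig_row p e) T = 0.
  move=> eE'; have [a [b [ab -> ->]]] := edgeset_rig_rowE eE eE'.
  by rewrite pairing_edge_row //; apply: big1 => i _; rewrite /T subrr mulr0.
have := pairing_span0 motionT WE.
rewrite load_pairing big_split /= !sum_mul_delta => /eqP.
by rewrite addrC addr_eq0 => /eqP.
Qed.

Lemma load_rotation j k :
  W (enum_rank u) k * (p u 0 j - p v 0 j) = W (enum_rank u) j * (p u 0 k - p v 0 k).
Proof.
pose T := fun (y : V) i => (if i == k then 1 else 0) * p y 0 j
                          - (if i == j then 1 else 0) * p y 0 k : R.
have motionT e : e \in E -> pairing (rig_row p e) T = 0.
  move=> eE'; have [a [b [ab -> ->]]] := edgeset_rig_rowE eE eE'.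
  rewrite pairing_edge_row // (eq_bigr (fun i => (p a 0 i - p b 0 i) *
     ((if i == k then 1 else 0) * (p a 0 j - p b 0 j)
      - (if i == j then 1 else 0) * (p a 0 k - p b 0 k)))); last first.
    by move=> i _; rewrite /T; ring.
  by rewrite sum_mul_deltaB; ring.
have := pairing_span0 motionT WE.
rewrite load_pairing big_split /= !sum_mul_deltaB !load_translation => h.
by apply/eqP; rewrite -subr_eq0; apply/eqP; rewrite -[RHS]h; ring.
Qed.

Lemma load_edge_row j0 : p u 0 j0 != p v 0 j0 -> (mxvec W <= edge_row u v)%MS.
Proof.
move=> pj0; have dj0 : p u 0 j0 - p v 0 j0 != 0 by rewrite subr_eq0.
pose c := W (enum_rank u) j0 / (p u 0 j0 - p v 0 j0).
have Wu k : W (enum_rank u) k = c * (p u 0 k - p v 0 k).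
  by rewrite /c mulrAC -(load_rotation j0 k) mulfK.
suff -> : W = c *: edge_mx u v by rewrite /edge_row linearZ scalemx_sub.
apply/matrixP => i j; rewrite [in RHS]mxE [in RHS]mxE.
have -> : W i j = W (enum_rank (enum_val i)) j by rewrite enum_valK.
case: eqP => [->|/eqP xu]; first by rewrite Wu.
case: eqP => [->|/eqP xv]; first by rewrite load_translation Wu; ring.
by rewrite W0 ?mulr0 // !inE negb_or xu xv.
Qed.

End LoadOnTwoVertices.

Lemma span_cap_sub_edge_row u v j0 E1 E2 (w : 'rV[R]_(#|V| * d)) :
  u != v -> p u 0 j0 != p v 0 j0 -> edgeset E1 -> edgeset E2 -> verts E1 :&: verts E2 \subset [set u; v] ->
  (w <= span E1)%MS -> (w <= span E2)%MS -> (w <= edge_row u v)%MS.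
Proof.
move=> uv pj0 eE1 eE2 sep wE1 wE2.
have w0 x j : x \notin [set u; v] -> vec_mx w (enum_rank x) j = 0.
  move=> xuv; have [x1|x1] := boolP (x \in verts E1); last first.
    exact: span_coord_notin_verts eE1 x1 wE1.
  have [x2|x2] := boolP (x \in verts E2); last first.
    exact: span_coord_notin_verts eE2 x2 wE2.
  by move: xuv; rewrite (subsetP sep) // inE x1 x2.
rewrite -(vec_mxK w) in wE1 *.
exact: (load_edge_row (W := vec_mx w) uv eE1 wE1 w0 pj0).
Qed.

End Motions.

Section RigidityMatroid.
Variables (R : realFieldType) (V : finType) (d : nat) (p : V -> 'rV[R]_d).
Local Notation span F := (\sum_(e in F%SET) <<rig_row p e>>)%MS.
Local Notation rk := (rank_d p).
Implicit Types E F G T C K : {set {set V}}.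

Lemma span_sub_mx F m (B : 'M_(m, #|V| * d)) :
  (forall e, e \in F -> (rig_row p e <= B)%MS) -> (span F <= B)%MS.
Proof. by move=> FB; apply/sumsmx_subP => e eF; rewrite genmxE FB. Qed.

Lemma row_sub_span e F : e \in F -> (rig_row p e <= span F)%MS.
Proof. by move=> eF; apply: (sumsmx_sup e) => //; rewrite genmxE. Qed.

Lemma spanS F G : F \subset G -> (span F <= span G)%MS.
Proof. by move=> /subsetP FG; apply: span_sub_mx => e /FG; apply: row_sub_span. Qed.

Lemma rank_setU_cap F G : (rk (F :|: G) + \rank (span F :&: span G) = rk F + rk G)%N.
Proof.
have -> : rk (F :|: G) = \rank (span F + span G)%MS.
  apply/eqmx_rank/andP; split; last by rewrite addsmx_sub !spanS ?subsetUl ?subsetUr.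
  apply: span_sub_mx => e; rewrite inE => /orP[] eFG.
    by apply: submx_trans (addsmxSl _ _); apply: row_sub_span.
  by apply: submx_trans (addsmxSr _ _); apply: row_sub_span.
exact: mxrank_sum_cap.
Qed.

Lemma rank_setU_le F G : (rk (F :|: G) <= rk F + rk G)%N.
Proof. by rewrite -rank_setU_cap leq_addr. Qed.

Lemma rank_set1_le e : (rk [set e] <= 1)%N.
Proof. by rewrite /rank_d big_set1 mxrank_gen rank_leq_row. Qed.

Lemma rank_le_card F : (rk F <= #|F|)%N.
Proof.
have [n] := ubnP #|F|; elim: n F => // n IH F Fn.
have [->|/set0Pn[e eF]] := eqVneq F set0; first by rewrite /rank_d big_set0 mxrank0.
have Fe : (#|F :\ e| < n)%N by move: Fn; rewrite (cardsD1 e) eF; lia.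
rewrite -(setD1K eF); apply: leq_trans (rank_setU_le _ _) _.
by rewrite cardsU1 setD11 /=; apply: leq_add; [apply: rank_set1_le | apply: IH].
Qed.

Definition indep F := (#|F| <= rk F)%N.

Lemma indepE F : indep F = ~~ dependent p F.
Proof. by rewrite /indep /dependent -leqNgt. Qed.

Lemma indep_sub F G : G \subset F -> indep F -> indep G.
Proof.
move=> GF; rewrite /indep => iF.
have FGF : G :|: (F :\: G) = F.
  by apply/setP => x; rewrite !inE; case: (boolP (x \in G)) => [/(subsetP GF) ->|].
have := rank_setU_le G (F :\: G); rewrite FGF.
have := rank_le_card (F :\: G); rewrite cardsDS //.
have := subset_leq_card GF; lia.
Qed.

Lemma dependent_neq0 T : dependent p T -> T != set0.
Proof. by apply: contraTneq => ->; rewrite /dependent cards0 ltn0. Qed.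

Lemma edgeset_sub F G : F \subset G -> edgeset G -> edgeset F.
Proof. by move=> /subsetP FG /forall_inP eG; apply/forall_inP => e /FG /eG. Qed.

Lemma rank_setU1_span x F : (rig_row p x <= span F)%MS -> rk (x |: F) = rk F.
Proof.
move=> xF; apply/eqmx_rank/andP; split; last exact/spanS/subsetUr.
by apply: span_sub_mx => e; rewrite !inE => /orP[/eqP -> //|]; apply: row_sub_span.
Qed.

Lemma rank_setU1_nspan x F : ~~ (rig_row p x <= span F)%MS -> rk (x |: F) = (rk F).+1.
Proof.
move=> xF; have FxF : (span F <= span (x |: F))%MS by apply/spanS/subsetUr.
have rk_lt : (rk F < rk (x |: F))%N.
  rewrite /rank_d ltn_neqAle (mxrank_leqif_sup FxF).2 mxrankS // andbT.
  by apply: contra xF => /(submx_trans (row_sub_span (setU11 x F))).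
apply/eqP; rewrite eqn_leq rk_lt andbT.
apply: leq_trans (rank_setU_le _ _) _.
by rewrite -add1n leq_add2r rank_set1_le.
Qed.

Definition circuitb C := [&& edgeset C, dependent p C &
  [forall F : {set {set V}}, (F \proper C) ==> ~~ dependent p F]].

Lemma circuitP C : reflect (circuit p C) (circuitb C).
Proof.
apply: (iffP and3P) => [[eC dC /forallP minC]|[eC [dC minC]]].
  by split => //; split => // F FC; have := minC F; rewrite FC.
by split => //; apply/forallP => F; apply/implyP => /minC.
Qed.

Lemma dependent_has_circuit T : edgeset T -> dependent p T ->
  exists C, C \subset T /\ circuit p C.
Proof.
have [n] := ubnP #|T|; elim: n T => // n IH T Tn eT dT.
case: (pickP [pred F : {set {set V}} | (F \proper T) && dependent p F]) =>
   [F /andP[FT dF] | minT].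
  have [||C [CF cC]] := IH F _ _ dF.
  - by have := proper_card FT; lia.
  - exact: edgeset_sub (proper_sub FT) eT.
  by exists C; split => //; apply: subset_trans CF (proper_sub FT).
exists T; split => //; split => //; split => // F FT; apply/negP => dF.
by have := minT F; rewrite /= FT dF.
Qed.

Lemma circuit_row_span C x : circuit p C -> x \in C ->
  (rig_row p x <= span (C :\ x))%MS.
Proof.
move=> [eC [dC minC]] xC; apply/negPn/negP => nx.
have := rank_setU1_nspan nx; rewrite setD1K // => rkC.
have := minC _ (properD1 xC); rewrite -indepE /indep; move: dC.
rewrite /dependent rkC (cardsD1 x C) xC; lia.
Qed.

Lemma circuit_rank_split C A : circuit p C -> C :&: A != set0 -> C :\: A != set0 ->
  (rk C < rk (C :&: A) + rk (C :\: A))%N.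
Proof.
move=> [eC [dC minC]] CA CdA.
have iCA : indep (C :&: A).
  rewrite indepE; apply: minC; rewrite properEneq subsetIl andbT.
  by apply: contraNneq CdA => CAC; rewrite setD_eq0 -{1}CAC subsetIr.
have iCdA : indep (C :\: A).
  rewrite indepE; apply: minC; rewrite properEneq subsetDl andbT.
  apply: contraNneq CA => CdAC; rewrite -{1}CdAC.
  by apply/eqP/setP => x; rewrite !inE; case: (x \in A) => //=; rewrite andbF.
by apply: leq_trans dC _; rewrite -(cardsID A C) leq_add.
Qed.

Lemma circuit_setU1 x T : edgeset (x |: T) -> x \notin T ->
  (rig_row p x <= span T)%MS -> indep T ->
  (forall y, y \in T -> indep (x |: (T :\ y))) -> circuit p (x |: T).
Proof.
move=> eT xT xS iT iTy; split => //; split.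
  rewrite /dependent rank_setU1_span // cardsU1 xT.
  exact: leq_ltn_trans (rank_le_card _) _.
move=> F FxT; rewrite -indepE.
have [xF|xF] := boolP (x \in F); last first.
  apply: indep_sub iT; apply/subsetP => z zF.
  have := subsetP (proper_sub FxT) z zF; rewrite !inE => /orP[/eqP zx|//].
  by move: xF; rewrite -zx zF.
have [_ [y yxT yF]] := properP FxT.
have yT : y \in T.
  by move: yxT; rewrite !inE => /orP[/eqP yx|//]; move: yF; rewrite yx xF.
apply: indep_sub (iTy y yT); apply/subsetP => t tF.
have := subsetP (proper_sub FxT) t tF; rewrite !inE => /orP[->//|tT].
by rewrite tT andbT orbC; apply/orP; left; apply: contraNneq yF => <-.
Qed.

Lemma circuit_of_min_span x T : edgeset (x |: T) -> x \notin T ->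
  (rig_row p x <= span T)%MS ->
  (forall y, y \in T -> ~~ (rig_row p x <= span (T :\ y))%MS) ->
  circuit p (x |: T).
Proof.
move=> exT xT xS minT; have eT := edgeset_sub (subsetUr _ _) exT.
have iT : indep T.
  rewrite indepE; apply/negP => /(dependent_has_circuit eT) [C [CT cC]].
  have /set0Pn[y yC] := dependent_neq0 cC.2.1.
  have yT := subsetP CT y yC.
  apply: (negP (minT y yT)); apply: submx_trans xS _; apply: span_sub_mx => z zT.
  have [->|zy] := eqVneq z y; last by apply: row_sub_span; rewrite !inE zy.
  exact: submx_trans (circuit_row_span cC yC) (spanS (setSD _ CT)).
apply: circuit_setU1 => // y yT.
have := indep_sub (subD1set T y) iT.
rewrite /indep rank_setU1_nspan ?(minT y yT) // cardsU1 in_setD1 (negbTE xT) andbF /=.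
lia.
Qed.

Lemma span_in_circuit E x : edgeset E -> x \in E ->
  (rig_row p x <= span (E :\ x))%MS ->
  exists C, [/\ C \subset E, circuit p C & x \in C].
Proof.
move=> eE xE.
have min_span n T : (#|T| < n)%N -> T \subset E :\ x ->
    (rig_row p x <= span T)%MS -> exists C, [/\ C \subset E, circuit p C & x \in C].
  elim: n T => // n IH T Tn TEx xT.
  case: (pickP [pred y | (y \in T) && (rig_row p x <= span (T :\ y))%MS]) =>
     [y /andP[yT xTy] | minT].
    apply: (IH (T :\ y)) => //; last exact: subset_trans (subD1set T y) TEx.
    by move: Tn; rewrite (cardsD1 y T) yT; lia.
  have xTE : x |: T \subset E.
    by rewrite subUset sub1set xE (subset_trans TEx (subD1set E x)).
  have xnT : x \notin T by apply/negP => /(subsetP TEx); rewrite !inE eqxx.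
  exists (x |: T); split; rewrite ?setU11 //.
  apply: circuit_of_min_span (edgeset_sub xTE eE) xnT xT _ => y yT.
  by apply/negP => xTy; have := minT y; rewrite /= yT xTy.
exact: min_span (ltnSn _) _.
Qed.

Definition coloops E := [set x in E |
  [forall C : {set {set V}}, (C \subset E) && circuitb C ==> (x \notin C)]].

Lemma coloopsP E x : reflect
  (x \in E /\ ~ exists C, [/\ C \subset E, circuit p C & x \in C]) (x \in coloops E).
Proof.
rewrite inE; apply: (iffP andP) => -[xE noC]; split => //.
  move=> [C [CE /circuitP cC xC]].
  by move: (forallP noC C); rewrite CE cC xC.
apply/forallP => C; apply/implyP => /andP[CE /circuitP cC].
by apply/negP => xC; apply: noC; exists C.
Qed.

Lemma coloop_nspan E x : edgeset E -> x \in coloops E ->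
  ~~ (rig_row p x <= span (E :\ x))%MS.
Proof.
move=> eE /coloopsP[xE noC]; apply/negP => /(span_in_circuit eE xE).
exact: noC.
Qed.

Lemma rank_setD_coloops E K : edgeset E -> K \subset coloops E ->
  rk E = (rk (E :\: K) + #|K|)%N.
Proof.
move=> eE; have [n] := ubnP #|K|; elim: n K => // n IH K Kn Kcol.
have [->|/set0Pn[x xK]] := eqVneq K set0; first by rewrite setD0 cards0 addn0.
have xcol := subsetP Kcol x xK; have xE : x \in E by case/coloopsP: xcol.
have Kx : (#|K :\ x| < n)%N by move: Kn; rewrite (cardsD1 x) xK; lia.
rewrite (IH _ Kx (subset_trans (subD1set K x) Kcol)) (cardsD1 x K) xK.
have -> : E :\: (K :\ x) = x |: (E :\: K).
  by apply/setP => z; rewrite !inE; case: eqP => [->|]; rewrite ?eqxx ?xE ?xK.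
rewrite rank_setU1_nspan /=; first lia.
apply: contra (coloop_nspan eE xcol) => /submx_trans; apply; apply: spanS.
apply/subsetP => z; rewrite !inE => /andP[zK ->]; rewrite andbT.
by apply: contraNneq zK => ->.
Qed.

Lemma cyclic_setD_coloops E : cyclic p (E :\: coloops E).
Proof.
move=> x /setDP[xE]; rewrite inE xE /= negb_forall => /existsP[C].
rewrite negb_imply negbK => /andP[/andP[CE /circuitP cC] xC].
exists C; split => //; apply/subsetP => y yC.
rewrite inE (subsetP CE y yC) andbT.
by apply/negP => /coloopsP[_]; apply; exists C.
Qed.

End RigidityMatroid.

Lemma generic_coord_neq (R : realFieldType) (V : finType) d (p : V -> 'rV[R]_d) :
  generic p -> forall (a b : V) (j : 'I_d), a != b -> p a 0 j != p b 0 j.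
Proof.
move=> gp a b j ab.
pose i1 := mxvec_index (enum_rank a) j.
pose i2 := mxvec_index (enum_rank b) j.
have i12 : i1 != i2.
  apply/eqP=> /(congr1 (fun k => enum_val (cast_ord (esym (mxvec_cast _ _)) k))).
  rewrite /i1 /i2 /mxvec_index !cast_ordK !enum_rankK => -[] /(congr1 enum_val).
  by rewrite !enum_rankK; apply/eqP.
have q_neq0 : ('X_i1 - 'X_i2 : {mpoly rat[#|V| * d]}) != 0.
  apply/eqP=> /(congr1 (mcoeff U_(i1))); rewrite mcoeffB !mcoeffXU eqxx.
  rewrite eq_sym (negbTE i12) subr0 mcoeff0 => /eqP.
  by rewrite oner_eq0.
have := gp _ q_neq0; rewrite mmapB /= !mmapX !mmap1U /coords !mxvecE !mxE !enum_rankK.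
by rewrite subr_eq0.
Qed.

Section GenericEdge.
Variables (R : realFieldType) (V : finType) (d : nat) (p : V -> 'rV[R]_d) (u v : V).
Hypotheses (hd : (0 < d)%N) (gp : generic p) (uv : u != v).
Local Notation span F := (\sum_(e in F%SET) <<rig_row p e>>)%MS.
Local Notation rk := (rank_d p).
Local Notation uv_row := (rig_row p [set u; v]).
Implicit Types E F : {set {set V}}.

Let j0 : 'I_d := Ordinal hd.
Let pj0 : p u 0 j0 != p v 0 j0 := generic_coord_neq gp j0 uv.

Lemma is_edge_uv : is_edge [set u; v].
Proof. by rewrite /is_edge cards2 uv. Qed.

Lemma edgeset_setU1_uv F : edgeset F -> edgeset ([set u; v] |: F).
Proof.
move=> eF; apply/forall_inP => e; rewrite !inE => /orP[/eqP -> |]; first exact: is_edge_uv.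
exact: (forall_inP eF).
Qed.

Lemma rig_row_uv : uv_row = edge_row p u v.
Proof.
have [a [b [ab ee ->]]] := rig_rowE p is_edge_uv.
have aE : a \in [set u; v] by rewrite ee !inE eqxx.
have bE : b \in [set u; v] by rewrite ee !inE eqxx orbT.
move: aE bE ab; rewrite !inE => /orP[]/eqP-> /orP[]/eqP->; rewrite ?eqxx //= => vu.
exact: edge_rowC vu.
Qed.

Lemma rig_row_uv_neq0 : uv_row != 0.
Proof.
rewrite rig_row_uv; apply/negP => /eqP /rowP /(_ (mxvec_index (enum_rank u) j0)).
rewrite mxvecE !mxE enum_rankK eqxx => /eqP; rewrite subr_eq0 (negbTE pj0).
by [].
Qed.

Lemma indep_uv : indep p [set [set u; v]].
Proof. by rewrite /indep /rank_d big_set1 mxrank_gen rank_rV rig_row_uv_neq0 cards1. Qed.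

Lemma span_cap_sub_uv E1 E2 : edgeset E1 -> edgeset E2 ->
  verts E1 :&: verts E2 \subset [set u; v] -> (span E1 :&: span E2 <= uv_row)%MS.
Proof.
move=> eE1 eE2 sep; apply/row_subP => i; rewrite rig_row_uv.
apply: (span_cap_sub_edge_row uv pj0 eE1 eE2 sep).
  exact: submx_trans (row_sub _ _) (capmxSl _ _).
exact: submx_trans (row_sub _ _) (capmxSr _ _).
Qed.

Lemma rank_glue_span E1 E2 : edgeset E1 -> edgeset E2 ->
  verts E1 :&: verts E2 \subset [set u; v] ->
  (uv_row <= span E1)%MS -> (uv_row <= span E2)%MS ->
  (rk (E1 :|: E2) + 1 = rk E1 + rk E2)%N.
Proof.
move=> eE1 eE2 sep uvE1 uvE2; rewrite -rank_setU_cap; congr (_ + _)%N.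
have cap_uv : (span E1 :&: span E2 == uv_row)%MS.
  by rewrite span_cap_sub_uv // sub_capmx uvE1 uvE2.
by rewrite (eqmx_rank cap_uv) rank_rV rig_row_uv_neq0.
Qed.

Lemma rank_glue_nspan E1 E2 : edgeset E1 -> edgeset E2 ->
  verts E1 :&: verts E2 \subset [set u; v] -> ~~ (uv_row <= span E1)%MS ->
  rk (E1 :|: E2) = (rk E1 + rk E2)%N.
Proof.
move=> eE1 eE2 sep uvE1; rewrite -rank_setU_cap.
have cap_uv := span_cap_sub_uv eE1 eE2 sep.
have cap_le1 : (\rank (span E1 :&: span E2) <= 1)%N.
  exact: leq_trans (mxrankS cap_uv) (rank_leq_row _).
suff -> : \rank (span E1 :&: span E2) = 0%N by rewrite addn0.
apply/eqP; rewrite -leqn0 -ltnS ltn_neqAle cap_le1 andbT.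
apply: contra uvE1 => /eqP cap1.
have : \rank (span E1 :&: span E2) == \rank uv_row by rewrite cap1 rank_rV rig_row_uv_neq0.
rewrite (mxrank_leqif_sup cap_uv).2 => uv_cap.
exact: submx_trans uv_cap (capmxSl _ _).
Qed.

End GenericEdge.

Section PrincipalPartition.
Variables (R : realFieldType) (V : finType) (d k : nat) (p : V -> 'rV[R]_d)
  (D : {set {set V}}) (P : {set {set {set V}}}).
Hypotheses (hkf : kfold_circuit p k D) (hpp : principal_partition p k D P).
Local Notation span F := (\sum_(e in F%SET) <<rig_row p e>>)%MS.
Local Notation rk := (rank_d p).
Implicit Types A B F X Y : {set {set V}}.

Lemma edgeset_D : edgeset D. Proof. by case: hkf. Qed.

Lemma cover_P : cover P = D. Proof. by case: hpp => /and3P[/eqP]. Qed.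

Lemma trivIset_P : trivIset P. Proof. by case: hpp => /and3P[]. Qed.

Lemma part_sub A : A \in P -> A \subset D.
Proof. by move=> AP; rewrite -cover_P; apply: bigcup_sup. Qed.

Lemma cover_sub (Q : {set {set {set V}}}) : Q \subset P -> cover Q \subset D.
Proof. by move=> QP; apply/bigcupsP => A /(subsetP QP) /part_sub. Qed.

Lemma edgeset_part A : A \in P -> edgeset A.
Proof. by move=> /part_sub /edgeset_sub; apply; exact: edgeset_D. Qed.

Lemma part_eq A B f : A \in P -> B \in P -> f \in A -> f \in B -> A = B.
Proof.
move=> AP BP fA fB.
by rewrite -(def_pblock trivIset_P AP fA) (def_pblock trivIset_P BP fB).
Qed.

Lemma part_neq0 A : A \in P -> A != set0.
Proof. by move=> AP; apply: contraTneq AP => ->; case: hpp => /and3P[]. Qed.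

Lemma in_part f : f \in D -> exists2 B, B \in P & f \in B.
Proof. by rewrite -cover_P => /bigcupP[B BP fB]; exists B. Qed.

Lemma part_setD_sub A B : A \in P -> B \in P -> A != B -> B \subset D :\: A.
Proof.
move=> AP BP AB; apply/subsetP => g gB; rewrite inE (subsetP (part_sub BP)) // andbT.
by apply: contra AB => gA; rewrite (part_eq AP BP gA gB).
Qed.

Lemma compl_part_neq0 A : (1 < k)%N -> A \in P -> D :\: A != set0.
Proof.
move=> k_gt1 AP; have [_ _ rkDA] : kfold_circuit p k.-1 (D :\: A).
  by apply: (proj2 (hpp.2 _ (subsetDl D A))); exists A.
by apply/negP => /eqP DA0; move: rkDA; rewrite DA0 cards0; lia.
Qed.

Lemma kfold_setD_coloops f : (0 < k)%N -> f \in D ->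
  kfold_circuit p k.-1 ((D :\ f) :\: coloops p (D :\ f)).
Proof.
move=> k_gt0 fD; have [_ cycD rkD] := hkf.
have eDf : edgeset (D :\ f) := edgeset_sub (subD1set D f) edgeset_D.
have colDf : coloops p (D :\ f) \subset D :\ f by apply/subsetP => x /coloopsP[].
have rkDf : rk (D :\ f) = rk D.
  have [C [CD cC fC]] := cycD f fD.
  have fDf : (rig_row p f <= span (D :\ f))%MS.
    by apply: submx_trans (circuit_row_span cC fC) _; apply/spanS/setSD.
  by rewrite -(rank_setU1_span fDf) setD1K.
split; first exact: edgeset_sub (subsetDl _ _) eDf.
  exact: cyclic_setD_coloops.
have := rank_setD_coloops (p := p) eDf (subxx _); rewrite rkDf cardsDS //.
have := subset_leq_card colDf; move: rkD; rewrite (cardsD1 f D) fD; lia.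
Qed.

Lemma part_coloop A f g : (0 < k)%N -> A \in P -> f \in A -> g \in A -> g != f ->
  ~~ (rig_row p g <= span (D :\ f :\ g))%MS.
Proof.
move=> k_gt0 AP fA gA gf.
have fD := subsetP (part_sub AP) f fA.
have eDf : edgeset (D :\ f) := edgeset_sub (subD1set D f) edgeset_D.
have WD : (D :\ f) :\: coloops p (D :\ f) \subset D.
  exact: subset_trans (subsetDl _ _) (subD1set D f).
have [B BP WB] := (hpp.2 _ WD).1 (kfold_setD_coloops k_gt0 fD).
have fB : f \in B.
  apply/negPn/negP => nfB; have : f \in D :\: B by rewrite inE nfB fD.
  by rewrite -WB !inE eqxx.
have {B BP fB WB}WA : (D :\ f) :\: coloops p (D :\ f) = D :\: A.
  by rewrite WB (part_eq BP AP fB fA).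
have gcol : g \in coloops p (D :\ f).
  apply/negPn/negP => gncol.
  have : g \in D :\: A by rewrite -WA in_setD gncol in_setD1 gf (subsetP (part_sub AP)).
  by rewrite in_setD gA.
exact: coloop_nspan eDf gcol.
Qed.

Section TwoTechnicolourVertices.
Variables (u v : V).
Hypotheses (hd : (0 < d)%N) (hk : (1 < k)%N) (gp : generic p) (hcon : Rconnected p D)
  (uv : u != v) (htech : forall x, technicolour D P x <-> x \in [set u; v]).
Local Notation uv_row := (rig_row p [set u; v]).

Let k_gt0 : (0 < k)%N := ltnW hk.

Lemma sep_part A X Y : A \in P -> X \subset A -> Y \subset D :\: A ->
  verts X :&: verts Y \subset [set u; v].
Proof.
move=> AP XA YDA; apply/subsetP => x; rewrite inE.
move=> /andP[/bigcupP[e eX xe] /bigcupP[f fY xf]].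
have /setDP[fD fA] := subsetP YDA f fY.
have [B BP fB] := in_part fD.
apply/htech; exists A, B, e, f; split => //; first by apply: contraNneq fA => ->.
by split => //; apply: (subsetP XA).
Qed.

Lemma uv_sub_verts : [set u; v] \subset verts D.
Proof.
apply/subsetP => x /htech[A [B [e [f [AP _ _ [eA _ xe _]]]]]].
by apply/bigcupP; exists e => //; apply: (subsetP (part_sub AP)).
Qed.

Lemma part_span_uv A : A \in P -> (uv_row <= span A)%MS.
Proof.
move=> AP; have [uvA|uvA] := boolP ([set u; v] \in A); first exact: row_sub_span.
apply/idPn => nA.
have /set0Pn[e eA] := part_neq0 AP.
have /set0Pn[f /setDP[fD fA]] := compl_part_neq0 hk AP.
have [C [CD cC eC fC]] := hcon (subsetP (part_sub AP) e eA) fD.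
have eCA : edgeset (C :&: A) := edgeset_sub (subsetIl _ _) cC.1.
have eCdA : edgeset (C :\: A) := edgeset_sub (subsetDl _ _) cC.1.
have sep := sep_part AP (subsetIr C A) (setSD A CD).
have nCA : ~~ (uv_row <= span (C :&: A))%MS.
  by apply: contra nA => /submx_trans; apply; apply/spanS/subsetIr.
have CA : C :&: A != set0 by apply/set0Pn; exists e; rewrite inE eC eA.
have CdA : C :\: A != set0 by apply/set0Pn; exists f; rewrite inE fC fA.
have := circuit_rank_split cC CA CdA.
by rewrite -{1}(setID C A) (rank_glue_nspan hd gp uv eCA eCdA sep nCA) ltnn.
Qed.

Lemma compl_span_uv A f g : A \in P -> f \in A -> g \in A ->
  (uv_row <= span (D :\ f :\ g))%MS.
Proof.
move=> AP fA gA; have /set0Pn[h /setDP[hD hA]] := compl_part_neq0 hk AP.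
have [B BP hB] := in_part hD.
have AB : A != B by apply: contraNneq hA => ->.
apply: submx_trans (part_span_uv BP) _; apply: spanS.
apply/subsetP => z zB; have /setDP[zD zA] := subsetP (part_setD_sub AP BP AB) z zB.
by rewrite !inE zD andbT; apply/andP; split; apply: contraNneq zA => ->.
Qed.

Lemma part_uv A : A \in P -> [set u; v] \in A -> A = [set [set u; v]].
Proof.
move=> AP uvA; apply/eqP; rewrite eqEsubset sub1set uvA andbT.
apply/subsetP => g gA; rewrite inE; apply/negPn/negP => g_uv.
have : ~~ (uv_row <= span (D :\ g :\ [set u; v]))%MS.
  by apply: part_coloop k_gt0 AP gA uvA _; rewrite eq_sym.
by move/negP; apply; apply: compl_span_uv AP gA uvA.
Qed.

Lemma part_indep_setU1_uv A f : A \in P -> [set u; v] \notin A -> f \in A ->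
  indep p ([set u; v] |: (A :\ f)).
Proof.
move=> AP uvA fA; rewrite indepE; apply/negP => dT.
have eT := edgeset_setU1_uv uv (edgeset_sub (subD1set A f) (edgeset_part AP)).
have [C [CT cC]] := dependent_has_circuit eT dT.
have [t tC t_uv] : exists2 t, t \in C & t != [set u; v].
  have : ~~ (C \subset [set [set u; v]]).
    apply/negP => /indep_sub /(_ (indep_uv hd gp uv)); rewrite indepE.
    by case: cC => _ [-> _].
  by case/subsetPn => t tC; rewrite inE => t_uv; exists t.
have := subsetP CT t tC; rewrite !inE (negbTE t_uv) /= => /andP[tf tA].
move/negP: (part_coloop k_gt0 AP fA tA tf); apply.
apply: submx_trans (circuit_row_span cC tC) _; apply: span_sub_mx => z.
rewrite !inE => /andP[zt zC]; have := subsetP CT z zC.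
rewrite !inE => /orP[/eqP -> |/andP[zf zA]]; first exact: compl_span_uv AP fA tA.
by apply: row_sub_span; rewrite !inE zt zf (subsetP (part_sub AP)).
Qed.

Lemma part_indep A : A \in P -> indep p A.
Proof.
move=> AP; have [uvA|uvA] := boolP ([set u; v] \in A).
  by rewrite (part_uv AP uvA); exact: indep_uv.
have /set0Pn[f fA] := part_neq0 AP.
have := part_indep_setU1_uv AP uvA fA.
rewrite /indep cardsU1 in_setD1 (negbTE uvA) andbF (cardsD1 f A) fA /= => h.
apply: leq_trans h (mxrankS _); apply: span_sub_mx => z.
rewrite !inE => /orP[/eqP -> |/andP[_ zA]]; first exact: part_span_uv.
exact: row_sub_span.
Qed.

Lemma part_circuit A : A \in P -> [set u; v] \notin A -> circuit p ([set u; v] |: A).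
Proof.
move=> AP uvA; have euvA := edgeset_setU1_uv uv (edgeset_part AP).
apply: (circuit_setU1 euvA uvA (part_span_uv AP) (part_indep AP)) => f fA.
exact: part_indep_setU1_uv AP uvA fA.
Qed.

Lemma rank_cover_parts (Q : {set {set {set V}}}) : Q \subset P -> Q != set0 ->
  (rk (cover Q) + #|Q| = #|cover Q| + 1)%N.
Proof.
have [n] := ubnP #|Q|; elim: n Q => // n IH Q Qn QP /set0Pn[A AQ].
have AP := subsetP QP A AQ.
have [QA|Q'0] := eqVneq (Q :\ A) set0.
  have -> : Q = [set A].
    by apply/eqP; rewrite eqEsubset sub1set AQ andbT -setD_eq0 QA.
  by apply/eqP; rewrite /cover big_set1 cards1 eqn_add2r eqn_leq rank_le_card; apply: part_indep.
have Q'P : Q :\ A \subset P := subset_trans (subD1set Q A) QP.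
have Q'n : (#|Q :\ A| < n)%N by move: Qn; rewrite (cardsD1 A Q) AQ; lia.
have CA : cover (Q :\ A) \subset D :\: A.
  apply/bigcupsP => B /setD1P[BA BQ].
  by apply: part_setD_sub AP (subsetP QP B BQ) _; rewrite eq_sym.
have uvC : (uv_row <= span (cover (Q :\ A)))%MS.
  have /set0Pn[B BQ'] := Q'0.
  apply: submx_trans (part_span_uv (subsetP Q'P B BQ')) _.
  exact/spanS/bigcup_sup.
have eC : edgeset (cover (Q :\ A)) := edgeset_sub (cover_sub Q'P) edgeset_D.
have glue := rank_glue_span hd gp uv (edgeset_part AP) eC (sep_part AP (subxx A) CA)
  (part_span_uv AP) uvC.
have disj : A :&: cover (Q :\ A) = set0.
  apply/setP => g; rewrite !inE; apply/andP => -[gA /(subsetP CA)].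
  by rewrite inE gA.
have cQ : cover Q = A :|: cover (Q :\ A) by rewrite /cover (big_setD1 A AQ).
rewrite cQ cardsU disj cards0 subn0 (cardsD1 A Q) AQ.
move: glue (IH _ Q'n Q'P Q'0) (part_indep AP) (rank_le_card p A); rewrite /indep.
lia.
Qed.

Lemma card_parts : #|P| = k.+1.
Proof.
have [A [B [e [f [AP _ _ _]]]]] := (htech u).2 (setU11 _ _).
have P_neq0 : P != set0 by apply/set0Pn; exists A.
have := rank_cover_parts (subxx P) P_neq0; rewrite cover_P; have [_ _ rkD] := hkf.
lia.
Qed.

Lemma parallel_connection_parts m (A : 'I_m -> {set {set V}}) :
  injective A -> (forall i, A i \in P) ->
  parallel_connection (fun i => [set u; v] |: A i) u v.
Proof.
move=> Ainj AP; split=> [i|i j ij]; first exact: setU11.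
have Aij : A i != A j by apply: contra ij => /eqP /Ainj ->.
split; rewrite ?verts_setU1 -setUIr; apply/setUidPl.
  apply/subsetP => z; rewrite inE => /andP[zi zj].
  by move: Aij; rewrite (part_eq (AP i) (AP j) zi zj) eqxx.
exact: sep_part (AP i) (subxx _) (part_setD_sub (AP i) (AP j) Aij).
Qed.

Lemma parallel_connection_cover (Q : {set {set {set V}}}) m : m = #|Q| -> (0 < m)%N ->
  Q \subset P -> [set u; v] \notin cover Q -> D \subset [set u; v] |: cover Q ->
  exists H : 'I_m -> {set {set V}},
    [/\ forall i, circuit p (H i), parallel_connection H u v,
        \bigcup_i H i = [set u; v] |: cover Q & verts D = \bigcup_i verts (H i)].
Proof.
move=> mQ m_gt0 QP uvQ DQ.
pose A i : {set {set V}} := @enum_val _ (mem Q) (cast_ord mQ i).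
have AQ i : A i \in Q by apply: enum_valP.
have AP i : A i \in P := subsetP QP _ (AQ i).
have Ainj : injective A by move=> i j /enum_val_inj /cast_ord_inj.
have cover_A : \bigcup_i A i = cover Q.
  apply/setP => z; apply/bigcupP/bigcupP => [[i _ zi]|[B BQ zB]]; first by exists (A i).
  exists (cast_ord (esym mQ) (enum_rank_in BQ B)) => //.
  by rewrite /A cast_ordKV enum_rankK_in.
have UQ : [set u; v] |: cover Q = [set u; v] |: D.
  by apply/eqP; rewrite eqEsubset setUS ?cover_sub //= subUset subsetUl DQ.
exists (fun i => [set u; v] |: A i); split.
- move=> i; apply: part_circuit (AP i) _.
  by apply: contra uvQ => uvA; apply/bigcupP; exists (A i).
- exact: parallel_connection_parts.
- by rewrite (bigcupUl (Ordinal m_gt0)) cover_A.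
- rewrite -verts_bigcup (bigcupUl (Ordinal m_gt0)) cover_A UQ verts_setU1.
  exact/esym/setUidPr/uv_sub_verts.
Qed.

Lemma parallel_connection_uv_in : [set u; v] \in D ->
  exists H : 'I_k -> {set {set V}},
    [/\ forall i, circuit p (H i), parallel_connection H u v,
        D = \bigcup_i H i & verts D = \bigcup_i verts (H i)].
Proof.
move=> uvD; have [A0 A0P uvA0] := in_part uvD.
have kQ : k = #|P :\ A0|.
  by apply/eqP; rewrite -eqSS -card_parts (cardsD1 A0 P) A0P.
have uvQ : [set u; v] \notin cover (P :\ A0).
  apply/bigcupP => -[A /setD1P[AA0 AP] uvA].
  by move: AA0; rewrite (part_eq AP A0P uvA uvA0) eqxx.
have DQ : D = [set u; v] |: cover (P :\ A0).
  by rewrite -{1}cover_P /cover (big_setD1 A0 A0P) /= (part_uv A0P uvA0).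
have DQs : D \subset [set u; v] |: cover (P :\ A0) by rewrite -DQ.
have [H [cH pcH UH vH]] := parallel_connection_cover kQ k_gt0 (subD1set P A0) uvQ DQs.
by exists H; split => //; rewrite UH.
Qed.

Lemma parallel_connection_uv_notin : [set u; v] \notin D ->
  exists H : 'I_k.+1 -> {set {set V}},
    [/\ forall i, circuit p (H i), parallel_connection H u v,
        D = (\bigcup_i H i) :\ [set u; v] & verts D = \bigcup_i verts (H i)].
Proof.
move=> uvD; have [||H [cH pcH UH vH]] :=
  parallel_connection_cover (esym card_parts) (ltn0Sn k) (subxx P).
- by rewrite cover_P.
- by rewrite cover_P subsetUr.
by exists H; split => //; rewrite UH cover_P setU1K.
Qed.

End TwoTechnicolourVertices.

End PrincipalPartition.

Theorem proposition3p11 (R : realFieldType) (V : finType) (d k : nat)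
  (p : V -> 'rV[R]_d) (D : {set {set V}}) (P : {set {set {set V}}}) (u v : V) :
  (1 <= d)%N -> (2 <= k)%N -> generic p ->
  Rconnected p D -> kfold_circuit p k D -> principal_partition p k D P ->
  u != v ->
  (forall x, technicolour D P x <-> x \in [set u; v]) ->
  ([set u; v] \in D ->
     exists H : 'I_k -> {set {set V}},
       [/\ forall i, circuit p (H i), parallel_connection H u v,
           D = \bigcup_i H i & verts D = \bigcup_i verts (H i)]) /\
  ([set u; v] \notin D ->
     exists H : 'I_k.+1 -> {set {set V}},
       [/\ forall i, circuit p (H i), parallel_connection H u v,
           D = (\bigcup_i H i) :\ [set u; v]
         & verts D = \bigcup_i verts (H i)]).
Proof.
move=> hd hk gp hcon hkf hpp uv htech; split.
  exact: (parallel_connection_uv_in hkf hpp hd hk gp hcon uv htech).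
exact: (parallel_connection_uv_notin hkf hpp hd hk gp hcon uv htech).
Qed.
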